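(* If a topological dynamical system $(X,T)$ is an almost one-to-one extension of a minimal equicontinuous system $(Y,S)$ (i.e. there is an almost one-to-one factor map $\pi:(X,T)\to(Y,S)$), then $(X,T)$ is syndetically equicontinuous, i.e. $\mathrm{Eq}_{\mathrm{syn}}(X,T)=X$.
   Context: Systems: compact metric $(X,\varrho)$ with continuous surjection $T$. Factor map: continuous surjection $\pi$ with $\pi\circ T=S\circ\pi$; almost one-to-one: $\{y:\pi^{-1}(y)\text{ is a singleton}\}$ is dense in $Y$. Equicontinuous: the family $\{S^n\}_{n\ge0}$ is equicontinuous. $S_T(U,\delta)=\{n\in\mathbb{N}:\exists x_1,x_2\in U,\ \varrho(T^nx_1,T^nx_2)>\delta\}$, $J_T(U,\delta)=\mathbb N\setminus S_T(U,\delta)$. $x\in\mathrm{Eq}_{\mathrm{syn}}(X,T)$ iff for every $\varepsilon>0$ some neighborhood $U$ of $x$ has $J_T(U,\varepsilon)$ syndetic (bounded gaps). *)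

From Stdlib Require Import Reals List.
Open Scope R_scope.

Section Metric.
Context {X : Type} (d : X -> X -> R).

Definition is_metric : Prop :=
  (forall x y, 0 <= d x y) /\
  (forall x y, d x y = 0 <-> x = y) /\
  (forall x y, d x y = d y x) /\
  (forall x y z, d x z <= d x y + d y z).

Definition ball (x : X) (r : R) : X -> Prop := fun y => d x y < r.

Definition is_open (U : X -> Prop) : Prop :=
  forall x, U x -> exists r, 0 < r /\ forall y, ball x r y -> U y.

Definition nbhd (x : X) (U : X -> Prop) : Prop :=
  exists V, is_open V /\ V x /\ forall y, V y -> U y.

Definition compact_space : Prop :=
  forall (I : Type) (U : I -> X -> Prop),
    (forall i, is_open (U i)) -> (forall x, exists i, U i x) ->
    exists l : list I, forall x, exists i, In i l /\ U i x.

Definition is_closed (A : X -> Prop) : Prop := is_open (fun x => ~ A x).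

Definition dense (A : X -> Prop) : Prop :=
  forall x eps, 0 < eps -> exists y, A y /\ d x y < eps.

End Metric.

Definition continuous_map {X Y : Type} (dX : X -> X -> R) (dY : Y -> Y -> R)
  (f : X -> Y) : Prop :=
  forall x eps, 0 < eps -> exists delta, 0 < delta /\
    forall x', dX x x' < delta -> dY (f x) (f x') < eps.

Definition tds {X : Type} (d : X -> X -> R) (T : X -> X) : Prop :=
  is_metric d /\ compact_space d /\ continuous_map d d T /\
  (forall y, exists x, T x = y).

Definition factor_map {X Y : Type} (dX : X -> X -> R) (dY : Y -> Y -> R)
  (T : X -> X) (S : Y -> Y) (pi : X -> Y) : Prop :=
  continuous_map dX dY pi /\ (forall y, exists x, pi x = y) /\
  (forall x, pi (T x) = S (pi x)).

Definition almost_one_to_one {X Y : Type} (dY : Y -> Y -> R) (pi : X -> Y) : Prop :=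
  dense dY (fun y => exists x, forall x', pi x' = y <-> x' = x).

Definition minimal {Y : Type} (d : Y -> Y -> R) (S : Y -> Y) : Prop :=
  forall A : Y -> Prop, is_closed d A -> (forall y, A y -> A (S y)) ->
    (exists y, A y) -> forall y, A y.

Definition equicontinuous {Y : Type} (d : Y -> Y -> R) (S : Y -> Y) : Prop :=
  forall y eps, 0 < eps -> exists delta, 0 < delta /\
    forall y' n, d y y' < delta -> d (Nat.iter n S y) (Nat.iter n S y') < eps.

(* J_T(U, delta) = N \ S_T(U, delta) *)
Definition J_T {X : Type} (d : X -> X -> R) (T : X -> X) (U : X -> Prop)
  (delta : R) (n : nat) : Prop :=
  ~ (exists x1 x2, U x1 /\ U x2 /\ d (Nat.iter n T x1) (Nat.iter n T x2) > delta).

Definition syndetic (A : nat -> Prop) : Prop :=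
  exists L : nat, (0 < L)%nat /\ forall m, exists n, (m <= n < m + L)%nat /\ A n.

Definition Eq_syn {X : Type} (d : X -> X -> R) (T : X -> X) (x : X) : Prop :=
  forall eps, 0 < eps -> exists U, nbhd d x U /\ syndetic (J_T d T U eps).

From Stdlib Require Import Reals List Lra Lia Classical.
Open Scope R_scope.

(* Fix a point y0 whose fibre is a singleton {x0}.  By compactness, the preimage of a
   small ball around y0 lies in the ball of radius e/2 around x0.  By minimality and
   compactness, the orbit of pi x returns syndetically to a still smaller ball around
   y0, and by equicontinuity so does the whole image of a fixed neighbourhood U of x
   at those times.  At such times T^n U lies in the ball around x0, so its diameter is
   below e. *)

Section MetricFacts.
Context {X : Type} (d : X -> X -> R) (Hd : is_metric d).

Lemma dist_refl (x : X) : d x x = 0.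
Proof. destruct Hd as [_ [H0 _]]. now apply H0. Qed.

Lemma dist_pos_neq (x y : X) : x <> y -> 0 < d x y.
Proof.
  destruct Hd as [Hnn [H0 _]]. intros Hxy.
  destruct (Rle_lt_or_eq_dec 0 (d x y) (Hnn x y)) as [Hlt|Heq]; [exact Hlt|].
  now destruct Hxy; apply H0.
Qed.

Lemma is_open_preimage_ball {Z : Type} (dZ : Z -> Z -> R) (f : Z -> X)
  (Hf : continuous_map dZ d f) (a : X) (r : R) :
  is_open dZ (fun z => d a (f z) < r).
Proof.
  destruct Hd as [_ [_ [_ Htri]]]. intros z Hz.
  destruct (Hf z (r - d a (f z))) as [dl [Hdl Hc]]; [lra|].
  exists dl; split; [exact Hdl|]. intros z' Hz'.
  specialize (Hc z' Hz'). specialize (Htri a (f z) (f z')). lra.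
Qed.

Lemma is_open_ball (a : X) (r : R) : is_open d (ball d a r).
Proof.
  apply (is_open_preimage_ball d (fun z => z)).
  intros x eps Heps. exists eps. split; [exact Heps | auto].
Qed.

End MetricFacts.

Lemma continuous_iter {X : Type} (d : X -> X -> R) (T : X -> X)
  (HT : continuous_map d d T) (n : nat) : continuous_map d d (Nat.iter n T).
Proof.
  induction n as [|n IH]; intros x eps Heps; simpl.
  - exists eps. split; auto.
  - destruct (HT (Nat.iter n T x) eps Heps) as [d1 [Hd1 H1]].
    destruct (IH x d1 Hd1) as [d2 [Hd2 H2]].
    exists d2. split; auto.
Qed.

Lemma iter_semiconj {X Y : Type} (T : X -> X) (S : Y -> Y) (pi : X -> Y)
  (H : forall x, pi (T x) = S (pi x)) (n : nat) (x : X) :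
  pi (Nat.iter n T x) = Nat.iter n S (pi x).
Proof. induction n as [|n IH]; simpl; [reflexivity|]. now rewrite H, IH. Qed.

Lemma list_pos_lower_bound {I : Type} (f : I -> R) (l : list I) :
  exists m, 0 < m /\ forall i, In i l -> 0 < f i -> m <= f i.
Proof.
  induction l as [|a l [m [Hm H]]].
  - exists 1. split; [lra | intros i []].
  - destruct (Rlt_dec 0 (f a)) as [Ha|Ha].
    + exists (Rmin m (f a)). split; [apply Rmin_pos; lra|].
      intros i [<-|Hi] Hp; [apply Rmin_r|].
      eapply Rle_trans; [apply Rmin_l | auto].
    + exists m. split; auto. intros i [<-|Hi] Hp; [lra | auto].
Qed.

Lemma syndetic_mono (A B : nat -> Prop) :
  (forall n, A n -> B n) -> syndetic A -> syndetic B.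
Proof.
  intros HAB [L [HL H]]. exists L. split; [exact HL|].
  intros m. destruct (H m) as [n [Hn HA]]. exists n. auto.
Qed.

(* Cover X by B(x0, e) together with, for each z, the preimage of the ball of radius
   d(pi z, y0)/2 around pi z; a finite subcover yields dl. *)
Lemma singleton_fiber_preimage_small {X Y : Type} (dX : X -> X -> R) (dY : Y -> Y -> R)
  (pi : X -> Y) (HXm : is_metric dX) (HXc : compact_space dX) (HYm : is_metric dY)
  (Hpi : continuous_map dX dY pi) (y0 : Y) (x0 : X)
  (Hfib : forall x, pi x = y0 <-> x = x0) (e : R) (He : 0 < e) :
  exists dl, 0 < dl /\ forall z, dY y0 (pi z) < dl -> dX x0 z < e.
Proof.
  pose proof HYm as [Ynn [_ [Ysym Ytri]]].
  set (U := fun z z' => dX x0 z' < e \/ dY (pi z) (pi z') < dY (pi z) y0 / 2).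
  destruct (HXc X U) as [l Hl].
  - intros z z' [H|H].
    + destruct (is_open_ball dX HXm x0 e z' H) as [r [Hr Hb]].
      exists r. split; auto. intros w Hw. left. now apply Hb.
    + destruct (is_open_preimage_ball dY HYm dX pi Hpi (pi z) _ z' H) as [r [Hr Hb]].
      exists r. split; auto. intros w Hw. right. now apply Hb.
  - intros z. exists z. unfold U.
    destruct (Rlt_dec (dX x0 z) e) as [H|H]; [now left | right].
    assert (Hz : pi z <> y0).
    { intros Hz. apply Hfib in Hz. subst z. rewrite (dist_refl dX HXm) in H. lra. }
    rewrite (dist_refl dY HYm). pose proof (dist_pos_neq dY HYm _ _ Hz). lra.
  - destruct (list_pos_lower_bound (fun z => dY (pi z) y0 / 2) l) as [dl [Hdl Hm]].
    exists dl. split; auto. intros z' Hz'.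
    destruct (Hl z') as [z [Hin [H|H]]]; auto.
    exfalso. specialize (Ynn (pi z) (pi z')).
    assert (Hpos : 0 < dY (pi z) y0 / 2) by lra.
    specialize (Hm z Hin Hpos). specialize (Ytri (pi z) (pi z') y0).
    rewrite (Ysym (pi z') y0) in Ytri. lra.
Qed.

Section MinimalReturn.
Context {Y : Type} (d : Y -> Y -> R) (S : Y -> Y).
Hypotheses (Hd : is_metric d) (HS : continuous_map d d S) (Hmin : minimal d S).

(* The set of points never entering the ball is closed and forward invariant, and
   misses its centre. *)
Lemma minimal_orbit_enters_ball (y0 : Y) (r : R) (Hr : 0 < r) (y : Y) :
  exists k, d y0 (Nat.iter k S y) < r.
Proof.
  apply NNPP. intros Hnever.
  set (A := fun z => forall k, ~ d y0 (Nat.iter k S z) < r).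
  assert (Hy0 : A y0).
  { apply (Hmin A).
    - intros w Hw. apply not_all_not_ex in Hw. destruct Hw as [k Hk].
      destruct (is_open_preimage_ball d Hd d _ (continuous_iter d S HS k) y0 r w Hk)
        as [s [Hs Hb]].
      exists s. split; auto. intros w' Hw' Aw'. apply (Aw' k). now apply Hb.
    - intros w Aw k. rewrite <- Nat.iter_succ_r. apply Aw.
    - exists y. intros k Hk. apply Hnever. now exists k. }
  apply (Hy0 0%nat). simpl. rewrite (dist_refl d Hd). exact Hr.
Qed.

Lemma minimal_return_syndetic (Hc : compact_space d) (y0 : Y) (r : R) (Hr : 0 < r)
  (y : Y) : syndetic (fun n => d y0 (Nat.iter n S y) < r).
Proof.
  destruct (Hc nat (fun k z => d y0 (Nat.iter k S z) < r)) as [l Hl].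
  - intros k. apply (is_open_preimage_ball d Hd). apply continuous_iter, HS.
  - intros z. now apply minimal_orbit_enters_ball.
  - exists (Datatypes.S (list_max l)). split; [lia|]. intros m.
    destruct (Hl (Nat.iter m S y)) as [k [Hin Hk]].
    assert (Hkl : (k <= list_max l)%nat).
    { apply (proj1 (Forall_forall _ l) (proj1 (list_max_le l _) (le_n _)) k Hin). }
    exists (k + m)%nat. split; [lia|]. now rewrite Nat.iter_add.
Qed.

End MinimalReturn.

Lemma J_T_of_image_in_ball {X : Type} (d : X -> X -> R) (Hd : is_metric d)
  (T : X -> X) (U : X -> Prop) (x0 : X) (e : R) (n : nat) :
  (forall z, U z -> d x0 (Nat.iter n T z) < e / 2) -> J_T d T U e n.
Proof.
  destruct Hd as [_ [_ [Hsym Htri]]].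
  intros HU [x1 [x2 [H1 [H2 H12]]]].
  specialize (Htri (Nat.iter n T x1) x0 (Nat.iter n T x2)).
  rewrite (Hsym _ x0) in Htri. pose proof (HU x1 H1). pose proof (HU x2 H2). lra.
Qed.

Theorem proposition4p2 (X Y : Type) (dX : X -> X -> R) (dY : Y -> Y -> R)
  (T : X -> X) (S : Y -> Y) (pi : X -> Y)
  (HX : tds dX T) (HY : tds dY S)
  (Hpi : factor_map dX dY T S pi) (Hpi1 : almost_one_to_one dY pi)
  (Hmin : minimal dY S) (Heq : equicontinuous dY S) :
  forall x : X, Eq_syn dX T x.
Proof.
  intros x e He.
  destruct HX as [HXm [HXc _]], HY as [HYm [HYc [HS _]]], Hpi as [Hc [_ Hcomm]].
  destruct (Hpi1 (pi x) 1) as [y0 [[x0 Hfib] _]]; [lra|].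
  destruct (singleton_fiber_preimage_small dX dY pi HXm HXc HYm Hc y0 x0 Hfib (e/2))
    as [dl [Hdl Hsmall]]; [lra|].
  destruct (Heq (pi x) (dl/2)) as [eta [Heta Hq]]; [lra|].
  set (U := fun z => dY (pi x) (pi z) < eta).
  exists U. split.
  - exists U. repeat split; auto.
    + apply (is_open_preimage_ball dY HYm dX pi Hc).
    + unfold U. now rewrite (dist_refl dY HYm).
  - apply (syndetic_mono (fun n => dY y0 (Nat.iter n S (pi x)) < dl/2));
      [| apply minimal_return_syndetic; auto; lra].
    intros n Hn. apply (J_T_of_image_in_ball dX HXm T U x0). intros z Hz.
    apply Hsmall. rewrite (iter_semiconj T S pi Hcomm).
    pose proof (Hq (pi z) n Hz). destruct HYm as [_ [_ [_ Htri]]].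
    specialize (Htri y0 (Nat.iter n S (pi x)) (Nat.iter n S (pi z))). lra.
Qed.
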